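(* Let $k\ge1$ be an odd integer and let $a$ be a positive integer. Then $$\binom{2ka-1}{2k-1}\equiv(-1)^{a+1}\binom{ka-1}{k-1}\pmod 4.$$ *)

From mathcomp Require Import all_boot all_order all_algebra.

From mathcomp Require Import all_boot all_order all_algebra.
From mathcomp Require Import zify ring.
Import GRing.Theory Num.Theory.

(* Splitting the falling factorial of 2n+1 into its odd and even factors gives
   C(2n+1, 2m+1) * (2m+1)!! = C(n, m) * prod_(i <= m) (2n+1-2i).  Take n = ka-1
   and m = k-1: modulo 4 every factor 2ka-1-2i is (-1)^(ka+1) (2i+1), so the
   right-hand product is (-1)^((ka+1)k) (2k-1)!! = (-1)^(a+1) (2k-1)!! as k is
   odd, and the odd factor (2k-1)!! cancels modulo 4. *)

Lemma mul_bin_left2 n m :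
  m.+1 * m.+2 * 'C(n, m.+2) = (n - m) * (n - m.+1) * 'C(n, m).
Proof. by rewrite -mulnA mul_bin_left mulnCA mul_bin_left mulnA [_ * (n - m)]mulnC. Qed.

Lemma mul_bin_doubleS n m :
  'C(n.*2.+1, m.*2.+1) * \prod_(i < m.+1) i.*2.+1
  = 'C(n, m) * \prod_(i < m.+1) (n.*2.+1 - i.*2).
Proof.
elim: m => [|m IH]; first by rewrite !big_ord1 bin1 bin0 muln1 mul1n subn0.
rewrite [in LHS]big_ord_recr [in RHS]big_ord_recr /= doubleS.
(* Multiply by 2(m+1) so that both binomials move two steps and one step down. *)
apply/eqP; rewrite -(eqn_pmul2l (ltn0Sn m.*2.+1)); apply/eqP.
have bin_odd_step := mul_bin_left2 n.*2.+1 m.*2.+1.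
rewrite (_ : n.*2.+1 - m.*2.+1 = 2 * (n - m)) in bin_odd_step; last by lia.
move: IH bin_odd_step (mul_bin_left n m).
set A := 'C(n.*2.+1, m.*2.+1); set P := \prod_(i < m.+1) _; set Q := \prod_(i < m.+1) _.
set d := n.*2.+1 - _ => IH bin_odd_step bin_step.
transitivity (m.*2.+2 * m.*2.+3 * 'C(n.*2.+1, m.*2.+3) * P); first ring.
rewrite bin_odd_step; transitivity (2 * (n - m) * d * (A * P)); first ring.
rewrite IH; transitivity (2 * d * Q * ((n - m) * 'C(n, m))); first ring.
by rewrite -bin_step -[m.*2.+2]/(m.+1).*2 -mul2n; ring.
Qed.

Lemma mul_bin_double_subn1 n m :
  'C(n.*2 - 1, m.*2 - 1) * \prod_(i < m) i.*2.+1
  = 'C(n - 1, m - 1) * \prod_(i < m) (n.*2 - i.*2.+1).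
Proof.
case: m => [|m]; first by rewrite !big_ord0 !bin0.
case: n => [|n]; first by rewrite [in RHS]big_ord_recl bin0n /= muln0.
rewrite !subn1 /=; under [in RHS]eq_bigr do rewrite doubleS subSS.
exact: mul_bin_doubleS.
Qed.

Local Open Scope ring_scope.

Lemma eqz_mod_prod [I : Type] [r : seq I] [P : pred I] [d : int] [F G : I -> int] :
  (forall i, P i -> F i = G i %[mod d])%Z ->
  (\prod_(i <- r | P i) F i = \prod_(i <- r | P i) G i %[mod d])%Z.
Proof.
move=> eqFG; apply: (big_ind2 (fun x y => x = y %[mod d])%Z) => // x1 x2 y1 y2 ex ey.
by rewrite -modzMm ex ey modzMm.
Qed.

Lemma eqz_modMr_coprime [d p : int] (m n : int) :
  coprimez d p -> (m * p == n * p %[mod d])%Z = (m == n %[mod d])%Z.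
Proof. by move=> cop_dp; rewrite !eqz_mod_dvd -mulrBl Gauss_dvdzl. Qed.

Lemma coprime4_prod_odd k : coprime 4 (\prod_(i < k) i.*2.+1).
Proof.
apply: (big_ind (coprime 4)) => [|x y cx cy|i _]; first exact: coprimen1.
  by rewrite coprimeMr cx.
by rewrite -[4%N]/(2 ^ 2)%N coprime_pexpl // coprime2n /= odd_double.
Qed.

Lemma double_sub_oddS_mod4 (n i : nat) : (i < n)%N ->
  ((n.*2 - i.*2.+1)%:Z = (-1) ^+ n.+1 * (i.*2.+1)%:Z %[mod 4])%Z.
Proof.
move=> lt_in; apply/eqP; rewrite eqz_mod_dvd -signr_odd /=.
have := odd_double_half n; case: (odd n) => /= def_n; apply/dvdzP.
  by exists ((n./2)%:Z - i%:Z); lia.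
by exists (n./2)%:Z; lia.
Qed.

Lemma prod_double_sub_oddS_mod4 (n k : nat) : (k <= n)%N ->
  ((\prod_(i < k) (n.*2 - i.*2.+1))%:Z
     = (-1) ^+ (n.+1 * k) * (\prod_(i < k) i.*2.+1)%:Z %[mod 4])%Z.
Proof.
move=> le_kn; rewrite -!natz !natr_prod.
have factor_mod4 (i : 'I_k) :
    ((n.*2 - i.*2.+1)%:R = (-1) ^+ n.+1 * (i.*2.+1)%:R %[mod 4])%Z.
  by rewrite !natz double_sub_oddS_mod4 // (leq_trans (ltn_ord i)).
by rewrite (eqz_mod_prod (fun i _ => factor_mod4 i)) prodrMl card_ord exprM.
Qed.

Theorem lemma3p2 (k a : nat) (hk : odd k) (ha : (0 < a)%N) :
  ((('C(2 * k * a - 1, 2 * k - 1))%:Z)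
     = (-1) ^+ (a + 1) * (('C(k * a - 1, k - 1))%:Z) %[mod 4])%Z.
Proof.
have k_le_ka : (k <= k * a)%N by rewrite leq_pmulr.
have sign_k : (-1) ^+ ((k * a).+1 * k) = (-1) ^+ (a + 1) :> int.
  by rewrite -[LHS]signr_odd -[RHS]signr_odd oddM /= oddM hk andbT addn1.
have cop4D : coprimez 4 (\prod_(i < k) i.*2.+1)%N := coprime4_prod_odd k.
rewrite -mulnA !mul2n; apply/eqP; rewrite -(eqz_modMr_coprime _ _ cop4D) -PoszM.
rewrite mul_bin_double_subn1 PoszM; apply/eqP.
by rewrite -modzMmr prod_double_sub_oddS_mod4 // modzMmr sign_k mulrCA mulrA.
Qed.
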